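(* Let $p,q$ be coprime integers with $p$ odd, $q$ even and $0<q<p$. Then the crossing number of the semi-even expansion of $p/q$ is less than or equal to the crossing number of the even expansion of $p/q$.
   Context: For a continued fraction $[a_1,\ldots,a_n]=a_1+\cfrac{1}{a_2+\cfrac{1}{\cdots+\cfrac{1}{a_n}}}$ with integer entries, its crossing number is $\sum_{i=1}^n|a_i|$. Both expansions are produced by the following procedure, which depends on a rule specifying at which steps $k$ the entry is required to be even. Start with $x_1=p/q$ and $\varepsilon_1=+1$. At step $k$, write $x_k=P_k/Q_k>0$ in lowest terms and divide with positive remainder: $P_k=cQ_k+r$ with integers $c$ and $0\le r<Q_k$. If step $k$ is required to be even and $c$ is odd, set $c_k=c+1$ and $r_k=r-Q_k$; otherwise set $c_k=c$ and $r_k=r$. Put $a_k=\varepsilon_k c_k$. If $r_k=0$, stop and output $[a_1,\ldots,a_k]$; otherwise set $x_{k+1}=Q_k/|r_k|$ and $\varepsilon_{k+1}=\varepsilon_k\cdot\mathrm{sign}(r_k)$ and continue. (One has $\varepsilon_k x_k=a_k+1/(\varepsilon_{k+1}x_{k+1})$, so the output is a continued fraction equal to $p/q$, and the procedure terminates.) The even expansion of $p/q$ is the output when every step $k$ is required to be even (all entries are then even). The semi-even expansion of $p/q$ is the output when exactly the steps with even index $k$ are required to be even (entries in odd positions are obtained by ordinary division with nonnegative remainder). For example, for $13/8$ the even expansion is $[2,-2,-2,2]$ (crossing number $8$) and the semi-even expansion is $[1,2,-2,-2]$ (crossing number $7$). *)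

From mathcomp Require Import all_boot all_order all_algebra.
Set Implicit Arguments. Unset Strict Implicit. Unset Printing Implicit Defensive.
Import GRing.Theory Num.Theory.
Local Open Scope ring_scope.

(* One run of the expansion procedure, with fuel.
   [req k] : step k is required to be even.
   [k]     : current step index (steps are numbered from 1).
   [eps]   : true means eps_k = +1, false means eps_k = -1.
   [P] [Q] : x_k = P/Q (reduced to lowest terms at each step). *)
Fixpoint cf_expand (req : nat -> bool) (fuel k : nat) (eps : bool) (P0 Q0 : nat)
  : option (seq int) :=
  match fuel with
  | 0 => None
  | fuel'.+1 =>
    let g := gcdn P0 Q0 in
    let P := (P0 %/ g)%N in
    let Q := (Q0 %/ g)%N in
    let c := (P %/ Q)%N in
    let r := (P %% Q)%N in
    let sgn : int := if eps then 1 else -1 in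
    if req k && odd c then
      (* c_k = c + 1, r_k = r - Q < 0, |r_k| = Q - r, eps_{k+1} = - eps_k *)
      let a := sgn * (c.+1)%:Z in
      match cf_expand req fuel' k.+1 (~~ eps) Q (Q - r)%N with
      | Some s => Some (a :: s)
      | None => None
      end
    else
      let a := sgn * c%:Z in
      if r == 0%N then Some [:: a]
      else match cf_expand req fuel' k.+1 eps Q r with
           | Some s => Some (a :: s)
           | None => None
           end
  end.

(* Fuel p + q is more than enough (the denominators strictly decrease,
   except in a case where the procedure stops at the next step). *)
Definition even_expansion (p q : nat) : option (seq int) :=
  cf_expand (fun _ => true) (p + q).+1 1 true p q.

Definition semi_even_expansion (p q : nat) : option (seq int) :=
  cf_expand (fun k => ~~ odd k) (p + q).+1 1 true p q.

Definition crossing_number (s : seq int) : nat := (\sum_(a <- s) `|a|)%N.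

Example ex_even : even_expansion 13 8 = Some [:: 2; -2; -2; 2]. Proof. by []. Qed.
Example ex_semi : semi_even_expansion 13 8 = Some [:: 1; 2; -2; -2]. Proof. by []. Qed.

From mathcomp Require Import all_boot all_order all_algebra.
From mathcomp Require Import zify.
Import GRing.Theory.

Set Implicit Arguments.
Unset Strict Implicit.
Unset Printing Implicit Defensive.

(* At a step whose numerator P and partial quotient c are both odd, the even
   expansion rounds c up and continues with Q/(Q - r), whereas the semi-even
   expansion keeps c and continues with Q/r; at every other step the two
   procedures take the same step.  So it suffices to know that, for Q even and
   r odd, the semi-even crossing number of Q/r exceeds that of Q/(Q - r) by at
   most one.  If 2r < Q, write Q = 2r + d: the semi-even expansions of
   Q/(Q - r) and of Q/r both reduce within two steps to that of r/d (or d/r,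
   which has the same crossing number), and the first one costs exactly one
   more. *)

Definition mixed_pair (P Q : nat) := [&& coprime P Q, odd (P + Q) & 0 < Q].

Lemma mixed_pair_gt0 P Q : mixed_pair P Q -> 0 < Q.
Proof. by case/and3P. Qed.

Lemma mixed_pair_sym P Q : mixed_pair P Q -> 0 < P -> mixed_pair Q P.
Proof.
by case/and3P => cPQ oPQ _ P0; rewrite /mixed_pair coprime_sym addnC cPQ oPQ.
Qed.

Lemma coprimeBr m n : n <= m -> coprime m (m - n) = coprime m n.
Proof.
move=> le_nm; rewrite /coprime; congr (_ == 1).
rewrite -{1 3}(subnK le_nm) [gcdn _ (_ - _)]gcdnC gcdnDl.
by rewrite [RHS]gcdnC gcdnDr gcdnC.
Qed.

Section Crossing.

(* The step index k and the numerator P of x_k = P/Q always have the same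
   parity, so the semi-even rule "k is even" reads "P is even".  [crossing P Q]
   is the crossing number of the expansion of P/Q; fuel Q suffices because
   the denominators decrease. *)
Variable all_even : bool.

Definition rounds_up (P Q : nat) := (all_even || ~~ odd P) && odd (P %/ Q).

Definition partial_quotient (P Q : nat) : nat := P %/ Q + rounds_up P Q.

Definition next_den (P Q : nat) :=
  if rounds_up P Q then Q - P %% Q else P %% Q.

Fixpoint cross (fuel P Q : nat) : nat :=
  if fuel is f.+1 then
    partial_quotient P Q +
    (if next_den P Q == 0 then 0 else cross f Q (next_den P Q))
  else 0.

Definition crossing (P Q : nat) := cross Q P Q.

Lemma odd_mod_mixed P Q :
  mixed_pair P Q -> odd (P %% Q) = odd P || rounds_up P Q.
Proof.
case/and3P => _ + _; have := congr1 odd (divn_eq P Q).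
rewrite /rounds_up oddD oddM oddD.
by case: (odd P) (odd Q) (odd (P %/ Q)) (odd (P %% Q)) all_even
  => [] [] [] [] [].
Qed.

Lemma rounds_up_mod_gt0 P Q : mixed_pair P Q -> rounds_up P Q -> 0 < P %% Q.
Proof. by move=> v ru; apply: odd_gt0; rewrite odd_mod_mixed // ru orbT. Qed.

Lemma next_rem_lt P Q : mixed_pair P Q -> next_den P Q < Q.
Proof.
move=> v; have Q0 := mixed_pair_gt0 v; rewrite /next_den.
case: ifP => [/(rounds_up_mod_gt0 v) r0|_]; last by rewrite ltn_mod.
by rewrite ltn_subrL r0.
Qed.

Lemma mixed_pair_next P Q :
  mixed_pair P Q -> next_den P Q != 0 -> mixed_pair Q (next_den P Q).
Proof.
move=> v nz; have Q0 := mixed_pair_gt0 v; have odd_r := odd_mod_mixed v.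
have r_le : P %% Q <= Q := ltnW (ltn_pmod P Q0).
case/and3P: v => cPQ oPQ _; rewrite /mixed_pair lt0n nz andbT.
have cQr : coprime Q (P %% Q) by rewrite /coprime gcdn_modr gcdnC.
rewrite /next_den; case: ifP => ru; move: odd_r oPQ; rewrite ru.
- by rewrite coprimeBr // cQr orbT !oddD oddB // => ->; case: (odd Q).
- by rewrite cQr orbF !oddD => ->; rewrite addbC.
Qed.

Lemma cross_fuel f1 f2 P Q :
  mixed_pair P Q -> Q <= f1 -> Q <= f2 -> cross f1 P Q = cross f2 P Q.
Proof.
elim: f1 f2 P Q => [|f1 IH] [|f2] P Q v; have Q0 := mixed_pair_gt0 v; try lia.
move=> le1 le2 /=; case: eqP => // /eqP nz; congr (_ + _).
have lt := next_rem_lt v; apply: IH; [exact: mixed_pair_next | lia | lia].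
Qed.

Lemma crossingE P Q : mixed_pair P Q ->
  crossing P Q =
  partial_quotient P Q +
  (if next_den P Q == 0 then 0 else crossing Q (next_den P Q)).
Proof.
move=> v; have := mixed_pair_gt0 v; have := next_rem_lt v.
rewrite /crossing; case: Q v => // Q v lt _ /=.
case: eqP => // /eqP nz; congr (_ + _).
by apply: cross_fuel (mixed_pair_next v nz) _ (leqnn _); rewrite -ltnS.
Qed.

Lemma crossing_sym P Q : mixed_pair P Q -> 0 < P -> crossing P Q = crossing Q P.
Proof.
wlog lt_PQ : P Q / P < Q => [hwlog v P0|v P0].
  case: (ltngtP P Q) => [lt_PQ|lt_QP|eq_PQ]; first exact: hwlog.
  - by rewrite (hwlog Q P lt_QP (mixed_pair_sym v P0) (mixed_pair_gt0 v)).
  - by case/and3P: v; rewrite eq_PQ addnn odd_double.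
rewrite crossingE // /partial_quotient /next_den /rounds_up.
by rewrite divn_small // modn_small //= andbF (negbTE (lt0n_neq0 P0)).
Qed.

Lemma cf_expand_crossing fuel k eps P Q :
  mixed_pair P Q -> odd k = odd P -> Q <= fuel ->
  exists2 s, cf_expand (fun j => all_even || ~~ odd j) fuel k eps P Q = Some s
           & crossing_number s = crossing P Q.
Proof.
have abs_sign (e : bool) (n : nat) : `|((if e then 1 else -1) * n%:Z)%R|%N = n.
  by case: e; rewrite ?mul1r ?mulN1r ?abszN absz_nat.
elim: fuel k eps P Q => [|f IH] k eps P Q v kP le_Qf.
  by have := mixed_pair_gt0 v; lia.
have kQ : odd k.+1 = odd Q.
  case/and3P: v => _ + _; rewrite oddS kP oddD.
  by case: (odd P) (odd Q) => [] [].
have cPQ : gcdn P Q = 1 by case/and3P: v => /eqP.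
have := next_rem_lt v; have := mixed_pair_next v.
rewrite /= cPQ !divn1 kP crossingE //.
rewrite /partial_quotient /next_den -/(rounds_up P Q).
rewrite /crossing_number; case: ifP => ru vnext lt.
- have nz : Q - P %% Q != 0.
    by rewrite subn_eq0 -ltnNge ltn_mod (mixed_pair_gt0 v).
  have [|s -> cs] := IH k.+1 (~~ eps) Q _ (vnext nz) kQ; first lia.
  eexists; first reflexivity.
  by rewrite big_cons abs_sign addn1 (negbTE nz) -cs.
- case: eqP => [_ | /eqP nz].
    by eexists; first reflexivity; rewrite big_seq1 abs_sign /= !addn0.
  have [|s -> cs] := IH k.+1 eps Q _ (vnext nz) kQ; first lia.
  by eexists; first reflexivity; rewrite big_cons abs_sign addn0 -cs.
Qed.

End Crossing.

Lemma crossing_semi_addmul k P Q : mixed_pair P Q -> odd P || ~~ odd k ->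
  crossing false (k * Q + P) Q = k + crossing false P Q.
Proof.
move=> v hk; have Q0 := mixed_pair_gt0 v.
have even_kQ : ~~ odd (k * Q).
  case/and3P: v => _ + _; move: hk; rewrite oddM oddD.
  by case: (odd P) (odd Q) (odd k) => [] [] [].
have v' : mixed_pair (k * Q + P) Q.
  case/and3P: v => cPQ oPQ _.
  have cQ : coprime (k * Q + P) Q by rewrite coprime_sym /coprime gcdnMDl gcdnC.
  by rewrite /mixed_pair cQ -addnA oddD (negbTE even_kQ) oPQ Q0.
have same : rounds_up false (k * Q + P) Q = rounds_up false P Q.
  move: hk even_kQ; rewrite /rounds_up divnMDl // !oddD oddM.
  by case: (odd P) (odd k) (odd Q) => [] [] [].
rewrite (crossingE false v') (crossingE false v) /partial_quotient /next_den.
by rewrite same divnMDl // modnMDl !addnA.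
Qed.

Lemma crossing_semi_compl Q r : ~~ odd Q -> odd r -> 2 * r < Q -> coprime Q r ->
  crossing false Q (Q - r) = (crossing false Q r).+1.
Proof.
move=> even_Q odd_r lt_2rQ cQr.
have [d def_Q] : exists d, Q = 2 * r + d by exists (Q - 2 * r); lia.
have d0 : 0 < d by lia.
have even_d : ~~ odd d by move: even_Q; rewrite def_Q oddD oddM.
have crd : coprime r d by move: cQr; rewrite def_Q coprime_sym /coprime gcdnMDl.
have vrd : mixed_pair r d.
  by rewrite /mixed_pair crd oddD odd_r (negbTE even_d) d0.
have vdr : mixed_pair d r := mixed_pair_sym vrd (odd_gt0 odd_r).
have eQ : Q = 1 * (r + d) + r by lia.
have vQ : mixed_pair Q (r + d).
  rewrite /mixed_pair addn_gt0 d0 orbT andbT {1}eQ coprime_sym /coprime gcdnMDl.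
  rewrite gcdnC gcdnDl -/(coprime r d) crd def_Q.
  rewrite (_ : 2 * r + d + (r + d) = r + (r + d).*2); last lia.
  by rewrite oddD odd_double odd_r.
have step_Q : crossing false Q (r + d) = 2 + crossing false (r + d) d.
  have qQ : Q %/ (r + d) = 1 by rewrite eQ divnMDl ?divn_small //; lia.
  have rQ : Q %% (r + d) = r by rewrite eQ modnMDl modn_small //; lia.
  rewrite crossingE // /partial_quotient /next_den /rounds_up qQ rQ even_Q.
  by rewrite addKn (negbTE (lt0n_neq0 d0)).
have step_rd : crossing false (r + d) d = 1 + crossing false r d.
  by rewrite -crossing_semi_addmul ?odd_r // mul1n addnC.
have step_Qr : crossing false Q r = 2 + crossing false d r.
  by rewrite def_Q crossing_semi_addmul //= orbT.
have -> : Q - r = r + d by lia.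
by rewrite step_Q step_rd step_Qr (crossing_sym false vdr d0); lia.
Qed.

Lemma crossing_semi_le_compl Q r : ~~ odd Q -> odd r -> r < Q -> coprime Q r ->
  crossing false Q r <= (crossing false Q (Q - r)).+1.
Proof.
move=> even_Q odd_r lt_rQ cQr.
case: (ltngtP (2 * r) Q) => [lt_2rQ|lt_Q2r|eq_Q2r].
- by rewrite crossing_semi_compl //; lia.
- have le_rQ := ltnW lt_rQ.
  have odd_Qr : odd (Q - r) by rewrite oddB // odd_r (negbTE even_Q).
  have cQQr : coprime Q (Q - r) by rewrite coprimeBr.
  rewrite -{1}(subKn le_rQ) crossing_semi_compl //; lia.
- by rewrite (_ : Q - r = r) //; lia.
Qed.

Lemma crossing_semi_le_even P Q :
  mixed_pair P Q -> crossing false P Q <= crossing true P Q.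
Proof.
elim/ltn_ind: Q P => Q IH P v.
have IHnext b : next_den b P Q != 0 ->
    crossing false Q (next_den b P Q) <= crossing true Q (next_den b P Q).
  by move=> nz; apply: IH (next_rem_lt b v) _ (mixed_pair_next v nz).
rewrite (crossingE false v) (crossingE true v).
case ru: (rounds_up false P Q == rounds_up true P Q).
  have -> : partial_quotient false P Q = partial_quotient true P Q.
    by rewrite /partial_quotient (eqP ru).
  have -> : next_den false P Q = next_den true P Q.
    by rewrite /next_den (eqP ru).
  by case: eqP => [_|/eqP /IHnext]; rewrite ?leq_add2l.
have [odd_P odd_c] : odd P /\ odd (P %/ Q).
  by move: ru; rewrite /rounds_up /=; case: (odd P) (odd (P %/ Q)) => [] [].
have odd_r : odd (P %% Q) by rewrite (odd_mod_mixed true v) odd_P.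
have even_Q : ~~ odd Q.
  by case/and3P: v => _ + _; rewrite oddD odd_P; case: (odd Q).
have lt_rQ : P %% Q < Q by rewrite ltn_mod (mixed_pair_gt0 v).
have nz : Q - P %% Q != 0 by rewrite subn_eq0 -ltnNge.
have cQr : coprime Q (P %% Q).
  by case/and3P: v; rewrite /coprime gcdn_modr gcdnC.
have := crossing_semi_le_compl even_Q odd_r lt_rQ cQr.
have := IHnext true.
rewrite /partial_quotient /next_den /rounds_up odd_P odd_c /=.
rewrite (negbTE nz) (negbTE (lt0n_neq0 (odd_gt0 odd_r))) => /(_ isT).
lia.
Qed.

Theorem proposition5 (p q : nat) :
  coprime p q -> odd p -> ~~ odd q -> (0 < q < p)%N ->
  exists se e : seq int,
    semi_even_expansion p q = Some se /\ even_expansion p q = Some e /\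
    (crossing_number se <= crossing_number e)%N.
Proof.
move=> cpq odd_p even_q /andP[q_gt0 _].
have v : mixed_pair p q by rewrite /mixed_pair cpq oddD odd_p (negbTE even_q).
have odd1p : odd 1 = odd p by rewrite odd_p.
have fuel_q : q <= (p + q).+1 by rewrite leqW ?leq_addl.
have [se semi cse] := cf_expand_crossing false true v odd1p fuel_q.
have [e even ce] := cf_expand_crossing true true v odd1p fuel_q.
exists se, e; split; first exact: semi.
by split; [exact: even | rewrite cse ce crossing_semi_le_even].
Qed.
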